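(* Let $G$ be a maximal outerplanar graph with at least four vertices (with a fixed outerplanar embedding). Let $uv$ be an edge on the outer face of $G$ with $\deg_G(u)>2$ and $\deg_G(v)>2$, and let $w=\Delta(uv)$. Let $G_u=G_u(uv)$ and $G_v=G_v(uv)$ be the $uv$-segments. Then $$\mathrm{mvc}(G)=\min\{\mathrm{mvc}_{w}(G_u)+\mathrm{mvc}_{vw}(G_v)-1,\ \mathrm{mvc}_{uw}(G_u)+\mathrm{mvc}_{w}(G_v)-1,\ \mathrm{mvc}(G_u)+\mathrm{mvc}(G_v)\}.$$
   Context: All graphs are finite and simple. A maximal outerplanar graph is an outerplanar graph to which no edge between existing vertices can be added while keeping it outerplanar. A fixed outerplanar embedding, with all vertices on the outer face, is assumed. For $S\subseteq V(G)$, $\mathrm{mvc}_S(G)$ is the minimum size of a vertex cover of $G$ containing $S$, and $\mathrm{mvc}(G)=\mathrm{mvc}_\emptyset(G)$. Braces are dropped for small sets, e.g. $\mathrm{mvc}_{uw}(G)=\mathrm{mvc}_{\{u,w\}}(G)$. For a maximal outerplanar graph with at least three vertices and an edge $uv$ on its outer face, $\Delta(uv)$ denotes the unique common neighbor of $u$ and $v$. $uv$-segments: let $w=\Delta(uv)$. $G_u(uv)$ is the maximal biconnected outerplanar subgraph of $G$ that has $uw$ on its outer face and does not contain $v$. Equivalently, it is the subgraph induced by $u$, $w$ and the vertices lying on the side of the edge $uw$ that does not contain $v$. It is the single edge $uw$ if $\deg_G(u)=2$. $G_v(uv)$ is defined symmetrically with the roles of $u$ and $v$ exchanged. $G_u$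 and $G_v$ are themselves maximal outerplanar graphs with outer edges $uw$ and $vw$ respectively. *)

From mathcomp Require Import all_boot.
Set Implicit Arguments. Unset Strict Implicit. Unset Printing Implicit Defensive.

Definition simple_graph (T : finType) (e : rel T) :=
  symmetric e /\ irreflexive e.

Definition deg (T : finType) (e : rel T) (x : T) : nat := #|[set y | e x y]|.

Definition lbetween (a x b : nat) : bool := (minn a b < x) && (x < maxn a b).

(* chords {a,b} and {c,d} of a convex polygon (vertices at positions on a
   circle) cross: four distinct endpoints, exactly one of c,d strictly
   between a and b. *)
Definition cross (a b c d : nat) : bool :=
  uniq [:: a; b; c; d] && (lbetween a c b != lbetween a d b).

(* An outerplanar embedding: the vertices are placed injectively in cyclic
   order 0, 1, ..., #|T|-1 on a circle, edges are drawn as chords, and no two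
   edges cross. *)
Definition outer_embedding (T : finType) (e : rel T) (pos : T -> 'I_#|T|) :=
  injective pos /\
  forall x y x' y', e x y -> e x' y' ->
    ~~ cross (pos x) (pos y) (pos x') (pos y').

Definition outerplanar (T : finType) (e : rel T) :=
  exists pos : T -> 'I_#|T|, outer_embedding e pos.

Definition add_edge (T : finType) (e : rel T) (x y : T) : rel T :=
  fun a b => [|| e a b, (a == x) && (b == y) | (a == y) && (b == x)].

Definition maximal_outerplanar (T : finType) (e : rel T) :=
  outerplanar e /\
  forall x y, x != y -> ~~ e x y -> ~ outerplanar (add_edge e x y).

(* uv lies on the outer face of the fixed embedding: u and v are adjacent
   and occupy cyclically consecutive positions. *)
Definition outer_edge (T : finType) (e : rel T) (pos : T -> 'I_#|T|) (u v : T) :=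
  e u v /\
  (((pos u).+1 %% #|T| == pos v) || ((pos v).+1 %% #|T| == pos u)).

(* Vertex set of the segment G_u(uv) with w = Delta(uv): u, w and all
   vertices lying on the side of the chord uw not containing v. *)
Definition segment (T : finType) (pos : T -> 'I_#|T|) (u w v : T) : {set T} :=
  [set x | [|| x == u, x == w |
              lbetween (pos u) (pos x) (pos w) != lbetween (pos u) (pos v) (pos w)]].

Definition is_vc (T : finType) (e : rel T) (A C : {set T}) : bool :=
  (C \subset A) &&
  [forall x in A, forall y in A, e x y ==> (x \in C) || (y \in C)].

(* mvc_S(G[A]): minimum size of a vertex cover of G[A] containing S
   (A itself is a cover, so #|A| is a valid default). *)
Definition mvc (T : finType) (e : rel T) (A S : {set T}) : nat :=
  \big[minn/#|A|]_(C : {set T} | is_vc e A C && (S \subset C)) #|C|.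

From mathcomp Require Import all_boot zify.
Set Implicit Arguments. Unset Strict Implicit. Unset Printing Implicit Defensive.

(* The chords uw and vw cut the outer cycle so that every vertex other than w
   lies in exactly one of the segments G_u, G_v, and since edges do not cross
   the only edge between G_u - w and G_v - w is uv.  Hence an optimal cover of G
   restricts to covers of G_u and G_v that overlap at most in w; conversely,
   covers of G_u and G_v glue to a cover of G as soon as one of them contains
   an end of uv.  Comparing sizes according to which of u, v, w are in the
   cover yields the three terms of the minimum. *)

Lemma bigmin_leq (I : finType) (P : pred I) (F : I -> nat) x i :
  P i -> \big[minn/x]_(j | P j) F j <= F i.
Proof.
move=> Pi; have : i \in index_enum I by rewrite mem_index_enum.
elim: (index_enum I) => // j r IHr; rewrite inE big_cons => /predU1P[<-|/IHr le_ri].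
  by rewrite Pi geq_minl.
by case: (P j); rewrite // geq_min le_ri orbT.
Qed.

Lemma bigmin_idx_or_attained (I : finType) (P : pred I) (F : I -> nat) x :
  let m := \big[minn/x]_(i | P i) F i in m = x \/ exists2 i, P i & m = F i.
Proof.
apply: (big_ind (fun m => m = x \/ exists2 i, P i & m = F i)); [by left | | by right; exists i].
by move=> m1 m2 K1 K2; case: leqP.
Qed.

Section VertexCover.
Variables (T : finType) (e : rel T).
Implicit Types A C S : {set T}.

Lemma is_vcP A C :
  reflect (C \subset A /\ {in A &, forall x y, e x y -> (x \in C) || (y \in C)})
          (is_vc e A C).
Proof.
apply: (iffP andP) => -[sub_CA cover]; split=> //.
  by move=> x y xA yA; move/forall_inP/(_ x xA)/forall_inP/(_ y yA)/implyP: cover.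
by apply/forall_inP=> x xA; apply/forall_inP=> y yA; apply/implyP; apply: cover.
Qed.

Lemma is_vcS A C C' : C \subset C' -> C' \subset A -> is_vc e A C -> is_vc e A C'.
Proof.
move=> sub_CC' sub_C'A /is_vcP[_ cover]; apply/is_vcP; split=> // x y xA yA exy.
by case/orP: (cover x y xA yA exy) => /(subsetP sub_CC') ->; rewrite ?orbT.
Qed.

Lemma is_vc_setIr A C : is_vc e [set: T] C -> is_vc e A (C :&: A).
Proof.
move=> /is_vcP[_ cover]; apply/is_vcP; split=> [|x y xA yA exy]; first exact: subsetIr.
by rewrite !inE xA yA !andbT; apply: cover; rewrite ?inE.
Qed.

Lemma mvc_leq A S C : is_vc e A C -> S \subset C -> mvc e A S <= #|C|.
Proof. by move=> vcC sub_SC; apply: bigmin_leq; rewrite vcC sub_SC. Qed.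

Lemma mvc_attained A S : S \subset A ->
  exists C, [/\ is_vc e A C, S \subset C & mvc e A S = #|C|].
Proof.
move=> sub_SA.
case: (bigmin_idx_or_attained (fun C => is_vc e A C && (S \subset C)) (fun C => #|C|) #|A|).
  by move=> mvcA; exists A; split=> //; apply/is_vcP; split=> // x y xA _ _; rewrite xA.
by case=> C /andP[vcC sub_SC] mvcC; exists C.
Qed.

End VertexCover.

Record bridged_split (T : finType) (e : rel T) (A B : {set T}) (u v w : T) : Prop :=
  BridgedSplit {
    split_cover : A :|: B = [set: T];
    split_meet : A :&: B = [set w];
    split_u : u \in A;
    split_v : v \in B;
    split_uv : e u v;
    split_uw : e u w;
    split_vw : e v w;
    split_bridge : forall x y, x \in A :\ w -> y \in B :\ w -> e x y -> x = u /\ y = v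
  }.

Lemma bridged_split_sym T e A B u v w : symmetric e ->
  @bridged_split T e A B u v w -> bridged_split e B A v u w.
Proof.
move=> e_sym [cov meet uA vB euv euw evw bridge]; split=> //; rewrite 1?setUC 1?setIC //.
  by rewrite e_sym.
by move=> x y xB yA exy; rewrite e_sym in exy; case: (bridge y x yA xB exy).
Qed.

Section BridgedSplit.
Variables (T : finType) (e : rel T) (A B : {set T}) (u v w : T).
Hypotheses (e_sym : symmetric e) (split : bridged_split e A B u v w).
Implicit Types Ca Cb : {set T}.

Lemma w_in_split : w \in A /\ w \in B.
Proof. by apply/andP; rewrite -in_setI (split_meet split) set11. Qed.

Lemma card_setU_split Ca Cb : Ca \subset A -> Cb \subset B ->
  #|Ca :|: Cb| + ((w \in Ca) && (w \in Cb)) = #|Ca| + #|Cb|.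
Proof.
move=> sub_CaA sub_CbB; rewrite -cardsUI -in_setI; congr (_ + _).
have : Ca :&: Cb \subset [set w] by rewrite -(split_meet split) setISS.
by rewrite subset1 => /orP[] /eqP ->; rewrite ?cards1 ?set11 ?cards0 ?inE.
Qed.

Lemma is_vc_setU Ca Cb : is_vc e A Ca -> is_vc e B Cb -> (u \in Ca) || (v \in Cb) ->
  is_vc e [set: T] (Ca :|: Cb).
Proof.
move=> /is_vcP[sub_CaA coverA] /is_vcP[sub_CbB coverB] uv_covered.
have [wA wB] := w_in_split.
have in_AB z : (z \in A) || (z \in B) by rewrite -in_setU (split_cover split) inE.
apply/is_vcP; split=> [|x y _ _]; first exact: subsetT.
wlog xA : x y / x \in A.
  move=> hwlog exy; case/orP: (in_AB x) => [xA|xB]; first exact: hwlog xA exy.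
  case/orP: (in_AB y) => [yA|yB]; first by rewrite orbC (hwlog y x) // e_sym.
  by rewrite !inE; case/orP: (coverB x y xB yB exy) => ->; rewrite !orbT.
move=> exy; rewrite !inE.
case/orP: (in_AB y) => [yA|yB]; first by case/orP: (coverA x y xA yA exy) => ->; rewrite ?orbT.
have [xw|xw] := eqVneq x w.
  by rewrite xw in exy *; case/orP: (coverB w y wB yB exy) => ->; rewrite !orbT.
have [yw|yw] := eqVneq y w.
  by rewrite yw in exy *; case/orP: (coverA x w xA wA exy) => ->; rewrite ?orbT.
have [-> ->] : x = u /\ y = v by apply: (split_bridge split); rewrite // !inE ?xw ?yw.
by case/orP: uv_covered => ->; rewrite ?orbT.
Qed.

Lemma mvc_split_lower :
  minn (minn (mvc e A [set w] + mvc e B [set v; w] - 1)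
             (mvc e A [set u; w] + mvc e B [set w] - 1))
       (mvc e A set0 + mvc e B set0) <= mvc e [set: T] set0.
Proof.
have [wA wB] := w_in_split.
have [C [vcC _ ->]] := mvc_attained e (sub0set [set: T]).
have vcCA := is_vc_setIr A vcC; have vcCB := is_vc_setIr B vcC.
have card_C : #|C :&: A| + #|C :&: B| = #|C| + (w \in C).
  by rewrite -card_setU_split ?subsetIr // -setIUr (split_cover split) setIT !inE wA wB !andbT andbb.
rewrite !geq_min; case wC : (w \in C) in card_C.
  have /orP[uC|vC] : (u \in C) || (v \in C).
    by move/is_vcP: vcC => [_]; apply; rewrite ?inE ?(split_uv split).
  - have le_A : mvc e A [set u; w] <= #|C :&: A|.
      by apply: mvc_leq vcCA _; rewrite subUset !sub1set !inE uC wC (split_u split) wA.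
    have le_B : mvc e B [set w] <= #|C :&: B|.
      by apply: mvc_leq vcCB _; rewrite sub1set !inE wC wB.
    lia.
  - have le_A : mvc e A [set w] <= #|C :&: A|.
      by apply: mvc_leq vcCA _; rewrite sub1set !inE wC wA.
    have le_B : mvc e B [set v; w] <= #|C :&: B|.
      by apply: mvc_leq vcCB _; rewrite subUset !sub1set !inE vC wC (split_v split) wB.
    lia.
have le_A : mvc e A set0 <= #|C :&: A| by apply: mvc_leq vcCA (sub0set _).
have le_B : mvc e B set0 <= #|C :&: B| by apply: mvc_leq vcCB (sub0set _).
lia.
Qed.

Lemma mvc_split_upper_w :
  mvc e [set: T] set0 <= mvc e A [set w] + mvc e B [set v; w] - 1.
Proof.
have [wA wB] := w_in_split.
have sub_wA : [set w] \subset A by rewrite sub1set.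
have sub_vwB : [set v; w] \subset B by rewrite subUset !sub1set (split_v split) wB.
have [Ca [vcCa wCa ->]] := mvc_attained e sub_wA.
have [Cb [vcCb vwCb ->]] := mvc_attained e sub_vwB.
move: wCa vwCb; rewrite sub1set subUset !sub1set => wCa /andP[vCb wCb].
have vcC := is_vc_setU vcCa vcCb (introT orP (or_intror vCb)).
rewrite -(card_setU_split (proj1 (is_vcP _ _ _ vcCa)) (proj1 (is_vcP _ _ _ vcCb))).
by rewrite wCa wCb addn1 subn1 (mvc_leq vcC (sub0set _)).
Qed.

Lemma mvc_split_upper : mvc e [set: T] set0 <= mvc e A set0 + mvc e B set0.
Proof.
have [Ca [vcCa _ ->]] := mvc_attained e (sub0set A).
have [Cb [vcCb _ ->]] := mvc_attained e (sub0set B).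
have [sub_CaA coverA] := is_vcP _ _ _ vcCa; have [sub_CbB coverB] := is_vcP _ _ _ vcCb.
have [wA wB] := w_in_split.
have card_C := card_setU_split sub_CaA sub_CbB.
have [uv_covered|] := boolP ((u \in Ca) || (v \in Cb)).
  by rewrite -card_C (leq_trans (mvc_leq (is_vc_setU vcCa vcCb uv_covered) (sub0set _))) ?leq_addr.
rewrite negb_or => /andP[/negbTE uCa /negbTE vCb].
have wCa : w \in Ca by have := coverA u w (split_u split) wA (split_uw split); rewrite uCa.
have wCb : w \in Cb by have := coverB v w (split_v split) wB (split_vw split); rewrite vCb.
have sub_uCaA : u |: Ca \subset A by rewrite subUset sub1set (split_u split).
have vcuCa : is_vc e A (u |: Ca) := is_vcS (subsetUr _ _) sub_uCaA vcCa.
have u_covered : (u \in u |: Ca) || (v \in Cb) by rewrite setU11.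
have card_uC : #|(u |: Ca) :|: Cb| = #|Ca| + #|Cb|.
  have := card_setU_split sub_uCaA sub_CbB.
  by rewrite cardsU1 !inE uCa wCa wCb orbT /= addn1 add1n addSn => /succn_inj.
by rewrite -card_uC (mvc_leq (is_vc_setU vcuCa vcCb u_covered) (sub0set _)).
Qed.

End BridgedSplit.

Theorem mvc_bridged_split T e A B u v w : symmetric e ->
  @bridged_split T e A B u v w ->
  mvc e [set: T] set0 =
  minn (minn (mvc e A [set w] + mvc e B [set v; w] - 1)
             (mvc e A [set u; w] + mvc e B [set w] - 1))
       (mvc e A set0 + mvc e B set0).
Proof.
move=> e_sym split; apply/eqP; rewrite eqn_leq (mvc_split_lower split) andbT !leq_min.
rewrite (mvc_split_upper_w e_sym split) (mvc_split_upper e_sym split) addnC.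
by rewrite (mvc_split_upper_w e_sym (bridged_split_sym e_sym split)).
Qed.

Definition cyclic_adj (n a b : nat) := (a.+1 %% n == b) || (b.+1 %% n == a).

Lemma cyclic_adj_cases n a b : a < n -> b < n -> cyclic_adj n a b ->
  b = a.+1 \/ a = b.+1 \/ (a = n.-1 /\ b = 0) \/ (b = n.-1 /\ a = 0).
Proof.
have succ_mod m : m < n -> m.+1 %% n = if m.+1 == n then 0 else m.+1.
  by move=> lt_mn; case: eqP => [->|?]; rewrite ?modnn // modn_small //; lia.
move=> lt_an lt_bn /orP[] /eqP <-; rewrite succ_mod //; case: eqP; lia.
Qed.

Lemma lbetweenP a x b : reflect ((a < x < b) \/ (b < x < a)) (lbetween a x b).
Proof. by apply: (iffP andP); lia. Qed.

(* For x distinct from a and c: x lies on the arc cut off by the chord ac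
   that does not contain b. *)
Definition across (a c b x : nat) := lbetween a x c != lbetween a b c.

Ltac case_lbetween :=
  repeat match goal with |- context[lbetween ?a ?x ?b] => case: (lbetweenP a x b) => ? end.

Section Circle.
Variables (n a b c : nat).
Hypotheses (lt_an : a < n) (lt_bn : b < n) (lt_cn : c < n).
Hypotheses (uniq_abc : uniq [:: a; b; c]) (adj_ab : cyclic_adj n a b).

Lemma across_xor x : x < n -> x \notin [:: a; b; c] -> across a c b x = ~~ across b c a x.
Proof.
move: uniq_abc; rewrite /across /= !inE !negb_or => dist_abc lt_xn dist_x.
have := cyclic_adj_cases lt_an lt_bn adj_ab; case_lbetween => //=; lia.
Qed.

Lemma across_cross x y : x < n -> y < n -> x \notin [:: a; b; c] -> y \notin [:: a; b; c] ->
  across a c b x -> across b c a y -> cross x y a c.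
Proof.
move: uniq_abc; rewrite /across /cross /= !inE !negb_or => dist_abc lt_xn lt_yn dist_x dist_y.
have := cyclic_adj_cases lt_an lt_bn adj_ab; case_lbetween => //=; rewrite ?andbT; lia.
Qed.

Lemma across_cross_l y : y < n -> y \notin [:: a; b; c] -> across b c a y -> cross a y b c.
Proof.
move: uniq_abc; rewrite /across /cross /= !inE !negb_or => dist_abc lt_yn dist_y.
have := cyclic_adj_cases lt_an lt_bn adj_ab; case_lbetween => //=; rewrite ?andbT; lia.
Qed.

Lemma across_cross_r x : x < n -> x \notin [:: a; b; c] -> across a c b x -> cross x b a c.
Proof.
move: uniq_abc; rewrite /across /cross /= !inE !negb_or => dist_abc lt_xn dist_x.
have := cyclic_adj_cases lt_an lt_bn adj_ab; case_lbetween => //=; rewrite ?andbT; lia.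
Qed.

End Circle.

Lemma in_segment (T : finType) (pos : T -> 'I_#|T|) u w v x :
  (x \in segment pos u w v) = [|| x == u, x == w | across (pos u) (pos w) (pos v) (pos x)].
Proof. by rewrite inE. Qed.

Lemma in_segmentD1 (T : finType) (pos : T -> 'I_#|T|) u w v x : u != w ->
  (x \in segment pos u w v :\ w) = (x == u) || (x != w) && across (pos u) (pos w) (pos v) (pos x).
Proof.
move=> uw; rewrite !inE /across; have [->|_] := eqVneq x u; first by rewrite uw.
by case: eqVneq.
Qed.

Section Segments.
Variables (T : finType) (e : rel T) (pos : T -> 'I_#|T|) (u v w : T).
Hypotheses (pos_inj : injective pos) (uvw : uniq [:: u; v; w]).
Hypothesis adj_uv : cyclic_adj #|T| (pos u) (pos v).

Let posn_inj : injective (fun x => nat_of_ord (pos x)).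
Proof. exact: inj_comp val_inj pos_inj. Qed.

Let uniq_pos : uniq [:: pos u : nat; pos v : nat; pos w : nat].
Proof. by move: uvw; rewrite -(map_inj_uniq posn_inj). Qed.

Let pos_notin x : x \notin [:: u; v; w] -> (pos x : nat) \notin [:: pos u : nat; pos v : nat; pos w : nat].
Proof. by rewrite -(mem_map posn_inj). Qed.

Lemma segments_cover : segment pos u w v :|: segment pos v w u = [set: T].
Proof.
apply/setP=> x; rewrite in_setU !in_segment inE.
have [|x_out] := boolP (x \in [:: u; v; w]).
  by rewrite !inE => /or3P[] /eqP->; rewrite eqxx ?orbT.
rewrite (across_xor _ _ _ uniq_pos adj_uv _ (pos_notin x_out)) //.
by case: across; rewrite ?orbT.
Qed.

Let neq_uv : u != v. Proof. by move: uvw; rewrite /= !inE !negb_or => /and3P[/andP[]]. Qed.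
Let neq_uw : u != w. Proof. by move: uvw; rewrite /= !inE !negb_or => /and3P[/andP[]]. Qed.
Let neq_vw : v != w. Proof. by move: uvw; rewrite /= !inE !negb_or => /and3P[]. Qed.

Lemma segments_meet : segment pos u w v :&: segment pos v w u = [set w].
Proof.
apply/setP=> x; rewrite in_setI !in_segment inE.
have [->|xw] := eqVneq x w; first by rewrite !orbT.
have [->|xu] := eqVneq x u; first by rewrite (negbTE neq_uv) /across eqxx.
have [->|xv] := eqVneq x v; first by rewrite /across eqxx.
have x_out : x \notin [:: u; v; w] by rewrite !inE (negbTE xu) (negbTE xv) (negbTE xw).
by rewrite (across_xor _ _ _ uniq_pos adj_uv _ (pos_notin x_out)) //= andNb.
Qed.

Hypothesis no_cross : forall x y x' y', e x y -> e x' y' ->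
  ~~ cross (pos x) (pos y) (pos x') (pos y').
Hypotheses (e_uw : e u w) (e_vw : e v w).

Let across_notin_u x : x != u -> x != w -> across (pos u) (pos w) (pos v) (pos x) ->
  (pos x : nat) \notin [:: pos u : nat; pos v : nat; pos w : nat].
Proof.
move=> xu xw x_across; have xv : x != v by apply: contraTneq x_across => ->; rewrite /across eqxx.
by apply: pos_notin; rewrite !inE (negbTE xu) (negbTE xv) (negbTE xw).
Qed.

Let across_notin_v y : y != v -> y != w -> across (pos v) (pos w) (pos u) (pos y) ->
  (pos y : nat) \notin [:: pos u : nat; pos v : nat; pos w : nat].
Proof.
move=> yv yw y_across; have yu : y != u by apply: contraTneq y_across => ->; rewrite /across eqxx.
by apply: pos_notin; rewrite !inE (negbTE yu) (negbTE yv) (negbTE yw).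
Qed.

Lemma segments_bridge x y :
  x \in segment pos u w v :\ w -> y \in segment pos v w u :\ w -> e x y -> x = u /\ y = v.
Proof.
rewrite !in_segmentD1 //.
have [-> _|xu /= /andP[xw x_across]] := eqVneq x u;
  have [-> _|yv /= /andP[yw y_across]] := eqVneq y v => e_xy //; exfalso.
- have := no_cross e_xy e_vw; rewrite (across_cross_l _ _ _ uniq_pos adj_uv) //.
  exact: across_notin_v.
- have := no_cross e_xy e_uw; rewrite (across_cross_r _ _ _ uniq_pos adj_uv) //.
  exact: across_notin_u.
- have := no_cross e_xy e_uw; rewrite (across_cross _ _ _ uniq_pos adj_uv) //.
  + exact: across_notin_u.
  + exact: across_notin_v.
Qed.

Lemma segments_bridged_split : e u v ->
  bridged_split e (segment pos u w v) (segment pos v w u) u v w.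
Proof.
split; rewrite ?segments_cover ?segments_meet ?in_segment ?eqxx //.
exact: segments_bridge.
Qed.

End Segments.

Theorem lemma1 (T : finType) (e : rel T) (pos : T -> 'I_#|T|) (u v w : T) :
  simple_graph e ->
  maximal_outerplanar e ->
  4 <= #|T| ->
  outer_embedding e pos ->
  outer_edge e pos u v ->
  2 < deg e u -> 2 < deg e v ->
  e u w -> e v w ->
  let Gu := segment pos u w v in
  let Gv := segment pos v w u in
  mvc e [set: T] set0 =
  minn (minn (mvc e Gu [set w] + mvc e Gv [set v; w] - 1)
             (mvc e Gu [set u; w] + mvc e Gv [set w] - 1))
       (mvc e Gu set0 + mvc e Gv set0).
Proof.
move=> [e_sym e_irr] _ _ [pos_inj no_cross] [e_uv adj_uv] _ _ e_uw e_vw Gu Gv.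
have neq_edge x y : e x y -> x != y by apply: contraTneq => ->; rewrite e_irr.
have uvw : uniq [:: u; v; w] by rewrite /= !inE !negb_or !neq_edge.
apply: mvc_bridged_split e_sym _.
exact: segments_bridged_split pos_inj uvw adj_uv no_cross e_uw e_vw e_uv.
Qed.
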